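(* For an algebra $\mathbf{A}$ the following are equivalent: (1) for all compatible reflexive relations $R,S,T$ of $\mathbf{A}$, $R\wedge(S\circ T)\subseteq(R\wedge S)\circ T$; (2) for all compatible reflexive relations $R,S,T$ of $\mathbf{A}$, $R\wedge(S\circ T)\subseteq(R\wedge S)\circ(R\wedge T)$.
   Context: $\wedge$ is intersection and $\circ$ is relational composition. A compatible reflexive relation of $\mathbf{A}$ is a reflexive subuniverse of $\mathbf{A}^2$. *)

From mathcomp Require Import all_boot.
Set Implicit Arguments. Unset Strict Implicit. Unset Printing Implicit Defensive.

Record algebra := Algebra {
  carrier : Type;
  op_sym : Type;
  arity : op_sym -> nat;
  op : forall f : op_sym, ('I_(arity f) -> carrier) -> carrier
}.

Definition rel_on (A : algebra) := carrier A -> carrier A -> Prop.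

Definition compatible (A : algebra) (R : rel_on A) : Prop :=
  forall (f : op_sym A) (a b : 'I_(arity f) -> carrier A),
    (forall k, R (a k) (b k)) -> R (op a) (op b).

Definition reflexive_rel (A : algebra) (R : rel_on A) : Prop :=
  forall x, R x x.

Definition comp_refl_rel (A : algebra) (R : rel_on A) : Prop :=
  reflexive_rel R /\ compatible R.

Definition rel_meet (A : algebra) (R S : rel_on A) : rel_on A :=
  fun x y => R x y /\ S x y.

Definition rel_comp (A : algebra) (S T : rel_on A) : rel_on A :=
  fun x y => exists z, S x z /\ T z y.

Definition rel_sub (A : algebra) (R S : rel_on A) : Prop :=
  forall x y, R x y -> S x y.

From mathcomp Require Import all_boot.
Set Implicit Arguments. Unset Strict Implicit. Unset Printing Implicit Defensive.

(* Since (R /\ T) <= T, (2) implies (1) by monotonicity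
   of composition.  For the converse, the class of compatible reflexive
   relations is closed under converse, and taking converses turns (1) into
   its mirror image  R /\ (S o T) <= S o (R /\ T).  Given x R y and
   x (S o T) y, property (1) yields z with x (R /\ S) z T y; then the mirror
   property, applied to R, R /\ S and T, refines this to
   x (R /\ S) w (R /\ T) y, which is (2). *)

Section ModularShift.

Variable A : algebra.
Implicit Types R S T : rel_on A.

Definition rel_cnv R : rel_on A := fun x y => R y x.

Definition left_shift : Prop :=
  forall R S T, comp_refl_rel R -> comp_refl_rel S -> comp_refl_rel T ->
    rel_sub (rel_meet R (rel_comp S T)) (rel_comp (rel_meet R S) T).

Definition right_shift : Prop :=
  forall R S T, comp_refl_rel R -> comp_refl_rel S -> comp_refl_rel T ->
    rel_sub (rel_meet R (rel_comp S T)) (rel_comp S (rel_meet R T)).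

Definition both_shift : Prop :=
  forall R S T, comp_refl_rel R -> comp_refl_rel S -> comp_refl_rel T ->
    rel_sub (rel_meet R (rel_comp S T))
            (rel_comp (rel_meet R S) (rel_meet R T)).

Lemma cnv_comp_refl R : comp_refl_rel R -> comp_refl_rel (rel_cnv R).
Proof.
move=> [R_refl R_comp]; split=> [x | f a b ab]; first exact: R_refl.
exact: R_comp.
Qed.

Lemma meet_comp_refl R S :
  comp_refl_rel R -> comp_refl_rel S -> comp_refl_rel (rel_meet R S).
Proof.
move=> [R_refl R_comp] [S_refl S_comp]; split=> [x | f a b ab]; first by split.
by split; [apply: R_comp | apply: S_comp] => k; case: (ab k).
Qed.

Lemma cnv_comp S T x y : rel_comp S T x y -> rel_comp (rel_cnv T) (rel_cnv S) y x.
Proof. by move=> [z [xSz zTy]]; exists z. Qed.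

Lemma comp_subr S T T' : rel_sub T T' -> rel_sub (rel_comp S T) (rel_comp S T').
Proof. by move=> TT' x y [z [xSz zTy]]; exists z; split=> //; apply: TT'. Qed.

(* Applying (1) to the converses R^c, T^c, S^c yields its mirror image. *)
Lemma left_shift_right_shift : left_shift -> right_shift.
Proof.
move=> shiftL R S T cR cS cT x y [xRy xSTy].
have yTSx : rel_meet (rel_cnv R) (rel_comp (rel_cnv T) (rel_cnv S)) y x.
  by split=> //; apply: cnv_comp.
have [w [[yRw yTw] wSx]] :=
  shiftL _ _ _ (cnv_comp_refl cR) (cnv_comp_refl cT) (cnv_comp_refl cS) y x yTSx.
by exists w; split=> //; split.
Qed.

(* (1) implies (2): shift R to the left by (1), then to the right by its mirror. *)
Lemma left_shift_both_shift : left_shift -> both_shift.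
Proof.
move=> shiftL R S T cR cS cT x y [xRy xSTy].
have xRS_Ty := shiftL R S T cR cS cT x y (conj xRy xSTy).
exact: (left_shift_right_shift shiftL cR (meet_comp_refl cR cS) cT)
  x y (conj xRy xRS_Ty).
Qed.

(* (2) implies (1), since R /\ T <= T. *)
Lemma both_shift_left_shift : both_shift -> left_shift.
Proof.
move=> shiftB R S T cR cS cT x y xRSTy.
by apply: comp_subr (shiftB R S T cR cS cT x y xRSTy) => u v [].
Qed.

End ModularShift.

Theorem theorem5p3 (A : algebra) :
  (forall R S T : rel_on A,
      comp_refl_rel R -> comp_refl_rel S -> comp_refl_rel T ->
      rel_sub (rel_meet R (rel_comp S T)) (rel_comp (rel_meet R S) T))
  <->
  (forall R S T : rel_on A,
      comp_refl_rel R -> comp_refl_rel S -> comp_refl_rel T ->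
      rel_sub (rel_meet R (rel_comp S T))
              (rel_comp (rel_meet R S) (rel_meet R T))).
Proof.
by split; [apply: left_shift_both_shift | apply: both_shift_left_shift].
Qed.
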